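(* Let $\beta=(\pi_\ell)_{\ell=1}^L$, $\pi_\ell=(a_\ell,b_\ell,c_\ell,d_\ell)$, be a chainable architecture with $L\ge 2$. Then $\mathcal{B}^\beta\subseteq\Sigma^{\pi_1*\cdots*\pi_L}$, and $$\pi_1*\cdots*\pi_L=\Big(a_1,\ \frac{b_1d_1}{d_L},\ \frac{a_Lc_L}{a_1},\ d_L\Big).$$
   Context: A pattern is a tuple $\pi=(a,b,c,d)$ of positive integers; $\mathbf{S}_\pi:=\mathbf{I}_a\otimes\mathbf{1}_{b\times c}\otimes\mathbf{I}_d\in\{0,1\}^{abd\times acd}$. A $\pi$-factor is a complex $abd\times acd$ matrix with support contained in that of $\mathbf{S}_\pi$; $\Sigma^\pi$ is the set of $\pi$-factors. Patterns $\pi=(a,b,c,d),\pi'=(a',b',c',d')$ are chainable if $ac/a'=b'd'/d$ is an integer, $a\mid a'$, $d'\mid d$; then $\pi*\pi':=(a,bd/d',a'c'/a,d')$. An architecture $\beta=(\pi_\ell)_{\ell=1}^L$ is a sequence of patterns with $a_\ell c_\ell d_\ell=a_{\ell+1}b_{\ell+1}d_{\ell+1}$; it is chainable if every consecutive pair is chainable. $\pi_1*\cdots*\pi_L$ denotes the iterated product $((\pi_1*\pi_2)*\cdots)*\pi_L$. $\mathcal{B}^\beta:=\{\mathbf{X}_1\cdots\mathbf{X}_L:\mathbf{X}_\ell\in\Sigma^{\pi_\ell}\}$. *)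

From HB Require Import structures.
From mathcomp Require Import all_boot all_order all_algebra.
From mathcomp Require Import complex.
From mathcomp Require Import Rstruct.
Set Implicit Arguments. Unset Strict Implicit. Unset Printing Implicit Defensive.
Import Order.TTheory GRing.Theory Num.Theory.
Local Open Scope ring_scope.

Definition Cplx : Type := (Rdefinitions.R)[i].

(* A (finite) matrix is represented as a function nat -> nat -> C;
   dimensions are carried separately, entries outside the intended
   box being 0 (this is enforced for pi-factors by the support condition). *)
Definition mat := nat -> nat -> Cplx.

Definition idm (n : nat) : mat := fun i j => ((i < n)%N && (i == j))%:R.
Definition ones (m n : nat) : mat := fun i j => ((i < m)%N && (j < n)%N)%:R.

(* Kronecker product A (x) B where B is m2 x n2 (row-major indexing). *)
Definition kron (m2 n2 : nat) (A B : mat) : mat :=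
  fun i j => A (i %/ m2)%N (j %/ n2)%N * B (i %% m2)%N (j %% n2)%N.

Definition mmul (k : nat) (X Y : mat) : mat :=
  fun i j => \sum_(t < k) X i t * Y t j.

Record pattern := Pattern { pa : nat; pb : nat; pc : nat; pd : nat }.

Definition pattern_pos (p : pattern) : Prop :=
  (0 < pa p)%N /\ (0 < pb p)%N /\ (0 < pc p)%N /\ (0 < pd p)%N.

(* S_pi = I_a (x) 1_{b x c} (x) I_d, an abd x acd 0/1 matrix. *)
Definition Spat (p : pattern) : mat :=
  kron (pd p) (pd p) (kron (pb p) (pc p) (idm (pa p)) (ones (pb p) (pc p)))
       (idm (pd p)).

Definition is_factor (p : pattern) (X : mat) : Prop :=
  forall i j, Spat p i j = 0 -> X i j = 0.

Definition chainable (p q : pattern) : Prop :=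
  [/\ (pa q %| pa p * pc p)%N, (pd p %| pb q * pd q)%N,
      ((pa p * pc p) %/ pa q = (pb q * pd q) %/ pd p)%N,
      (pa p %| pa q)%N & (pd q %| pd p)%N].

Definition pstar (p q : pattern) : pattern :=
  Pattern (pa p) ((pb p * pd p) %/ pd q)%N ((pa q * pc q) %/ pa p)%N (pd q).

Definition default_pattern := Pattern 1 1 1 1.
Definition arch_nth (beta : seq pattern) (l : nat) := nth default_pattern beta l.

Definition is_architecture (beta : seq pattern) : Prop :=
  (forall l, (l < size beta)%N -> pattern_pos (arch_nth beta l)) /\
  (forall l, (l.+1 < size beta)%N ->
     (pa (arch_nth beta l) * pc (arch_nth beta l) * pd (arch_nth beta l) =
      pa (arch_nth beta l.+1) * pb (arch_nth beta l.+1) * pd (arch_nth beta l.+1))%N).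

Definition chainable_arch (beta : seq pattern) : Prop :=
  forall l, (l.+1 < size beta)%N -> chainable (arch_nth beta l) (arch_nth beta l.+1).

Definition pstar_all (beta : seq pattern) : pattern :=
  foldl pstar (head default_pattern beta) (behead beta).

(* Left-to-right product X_1 X_2 ... X_L; the inner dimension at each step
   is the row count a_l b_l d_l of the next pattern. *)
Fixpoint chain_prod (acc : mat) (s : seq (pattern * mat)) : mat :=
  match s with
  | [::] => acc
  | (p, X) :: s' => chain_prod (mmul (pa p * pb p * pd p)%N acc X) s'
  end.

Definition inB (beta : seq pattern) (M : mat) : Prop :=
  exists Xs : seq mat,
    size Xs = size beta /\
    (forall l, (l < size beta)%N -> is_factor (arch_nth beta l) (nth (fun _ _ => 0) Xs l)) /\
    M = chain_prod (head (fun _ _ => 0) Xs) (zip (behead beta) (behead Xs)).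

From mathcomp Require Import all_boot all_order all_algebra.
From mathcomp Require Import complex Rstruct.
From mathcomp Require Import ring.
Import GRing.Theory Num.Theory.

(* If a product
   X Y with X a p-factor and Y a q-factor has a nonzero entry (i, k), some t
   has (i, t) in the support of S_p and (t, k) in that of S_q; chainability
   makes the divisibility bookkeeping collapse so that (i, k) lies in the
   support of S_(p*q).  Induction along the architecture gives the inclusion,
   and the formula for the iterated product telescopes because d_(l+1) | d_l. *)

Definition pattern_supp (p : pattern) (i j : nat) : bool :=
  [&& i %/ pd p %/ pb p < pa p, i %/ pd p %/ pb p == j %/ pd p %/ pc p
    & i %% pd p == j %% pd p].

Lemma Spat_neq0E p i j : pattern_pos p -> (Spat p i j != 0%R) = pattern_supp p i j.
Proof.
case: p => a b c d [/= a0 [b0 [c0 d0]]].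
rewrite /Spat /kron /idm /ones /pattern_supp /=.
rewrite !mulf_eq0 !negb_or !pnatr_eq0 !eqb0 !negbK !ltn_mod b0 c0 d0 /=.
by rewrite andbT -andbA.
Qed.

Lemma factor_suppP p (X : mat) : pattern_pos p ->
  is_factor p X <-> forall i j, X i j != 0%R -> pattern_supp p i j.
Proof.
move=> pp; split=> HX i j.
  by rewrite -Spat_neq0E //; apply: contra => /eqP /HX ->.
move=> Sij0; apply/eqP/negPn/negP => /HX; by rewrite -Spat_neq0E // Sij0 eqxx.
Qed.

Lemma mmul_neq0 k (X Y : mat) i j : mmul k X Y i j != 0%R ->
  exists2 t, X i t != 0%R & Y t j != 0%R.
Proof.
case: (pickP (fun t : 'I_k => X i t * Y t j != 0)%R) => [t | XY0].
  by rewrite mulf_eq0 negb_or => /andP[] Xit Ytj _; exists t.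
by rewrite /mmul big1 ?eqxx // => t _; apply/eqP/negbFE/XY0.
Qed.

Lemma pattern_pos_pstar p q : pattern_pos p -> pattern_pos q -> chainable p q ->
  pattern_pos (pstar p q).
Proof.
case: p => a b c d [/= a0 [b0 [c0 d0]]].
case: q => a' b' c' d' [/= a0' [b0' [c0' d0']]] [/= _ _ _ aa' d'd].
rewrite /pattern_pos /= !divn_gt0 //; split=> //; split; last split=> //.
  exact: leq_trans (dvdn_leq d0 d'd) (leq_pmull _ b0).
exact: leq_trans (dvdn_leq a0' aa') (leq_pmulr _ c0').
Qed.

Lemma pattern_supp_pstar p q i t k :
  pattern_pos p -> pattern_pos q -> chainable p q ->
  pattern_supp p i t -> pattern_supp q t k -> pattern_supp (pstar p q) i k.
Proof.
case: p => a b c d [/= a0 [b0 [c0 d0]]].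
case: q => a' b' c' d' [/= a0' [b0' [c0' d0']]].
case=> /= /dvdnP[g Eac] /dvdnP[f Eb'd'] Eg /dvdnP[n Ea'] /dvdnP[e Ed].
subst a' d; rewrite Eac Eb'd' !mulnK // in Eg; subst g.
have Eb' : b' = f * e by apply/eqP; rewrite -(eqn_pmul2r d0') Eb'd' mulnA.
have Ec : c = f * n by apply/eqP; rewrite -(eqn_pmul2l a0) Eac; apply/eqP; ring.
subst b' c; rewrite /pattern_supp /=.
case/and3P=> it_lt /eqP it_blk /eqP it_mod /and3P[_ /eqP tk_blk /eqP tk_mod].
have -> : b * (e * d') %/ d' = b * e by rewrite mulnA mulnK.
have -> : n * a * c' %/ a = n * c' by rewrite mulnAC mulnK.
have row : i %/ d' %/ (b * e) = i %/ (e * d') %/ b.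
  by rewrite -!divnMA; congr (_ %/ _); ring.
have col : k %/ d' %/ (n * c') = t %/ (e * d') %/ (f * n).
  by rewrite mulnC divnMA -tk_blk -!divnMA; congr (_ %/ _); ring.
have mod_d' : i = t %[mod d'].
  by rewrite -(modn_dvdm i (dvdn_mull e (dvdnn d'))) it_mod modn_dvdm // dvdn_mull.
by rewrite row col it_lt it_blk mod_d' tk_mod !eqxx.
Qed.

Lemma is_factor_mmul p q k (X Y : mat) :
  pattern_pos p -> pattern_pos q -> chainable p q ->
  is_factor p X -> is_factor q Y -> is_factor (pstar p q) (mmul k X Y).
Proof.
move=> pp pq cpq; rewrite !factor_suppP //; last exact: pattern_pos_pstar.
move=> X_supp Y_supp i j /mmul_neq0[t /X_supp it /Y_supp tj].
exact: pattern_supp_pstar it tj.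
Qed.

Lemma chainable_pstar p q r : chainable p q -> chainable q r ->
  chainable (pstar p q) r.
Proof.
case: p => a b c d; case: q => a' b' c' d'.
case=> /= _ _ _ aa' _ [/= a'c' d'r Er a'a'' d''d'].
rewrite /chainable /pstar /=.
have -> : a * (a' * c' %/ a) = a' * c' by rewrite mulnC divnK // dvdn_mulr.
by split=> //; exact: dvdn_trans aa' a'a''.
Qed.

Fixpoint chain_from (p : pattern) (s : seq pattern) : Prop :=
  if s is q :: s' then [/\ chainable p q, pattern_pos q & chain_from q s']
  else True.

Lemma chain_from_pstar p q s : chainable p q -> chain_from q s ->
  chain_from (pstar p q) s.
Proof. by case: s => [|r s] //= cpq [cqr pr cs]; split=> //; exact: chainable_pstar. Qed.

Lemma chain_from_arch p s :
  (forall l, l < size (p :: s) -> pattern_pos (arch_nth (p :: s) l)) ->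
  chainable_arch (p :: s) -> chain_from p s.
Proof.
elim: s p => [//|q s IH] p pos chain /=.
split; [exact: (chain 0) | exact: (pos 1) |].
by apply: IH => l lt_l; [exact: (pos l.+1) | exact: (chain l.+1)].
Qed.

Lemma foldl_pstar p q s : chain_from p (q :: s) ->
  foldl pstar p (q :: s) = Pattern (pa p) (pb p * pd p %/ pd (last q s))
    (pa (last q s) * pc (last q s) %/ pa p) (pd (last q s)).
Proof.
elim: s p q => [//|r s IH] p q [cpq _ [cqr pr cs]].
rewrite -[foldl _ _ _]/(foldl pstar (pstar p q) (r :: s)) IH /=; last first.
  by split=> //; exact: chainable_pstar.
by case: cpq => _ _ _ _ d'd; rewrite divnK // dvdn_mull.
Qed.

Lemma is_factor_chain_prod p s (M : mat) (Xs : seq mat) :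
  pattern_pos p -> chain_from p s -> is_factor p M -> size Xs = size s ->
  (forall l, l < size s ->
     is_factor (nth default_pattern s l) (nth (fun _ _ => 0%R) Xs l)) ->
  is_factor (foldl pstar p s) (chain_prod M (zip s Xs)).
Proof.
elim: s p M Xs => [|q s IH] p M [|X Xs] //= pp [cpq pq cs] fM [sz] fXs.
apply: IH => //; first exact: pattern_pos_pstar.
- exact: chain_from_pstar.
- by apply: is_factor_mmul => //; exact: (fXs 0).
- by move=> l; exact: (fXs l.+1).
Qed.

Theorem lemma4p9 (beta : seq pattern) :
  is_architecture beta -> chainable_arch beta -> (2 <= size beta)%N ->
  (forall M : mat, inB beta M -> is_factor (pstar_all beta) M) /\
  pstar_all beta =
    Pattern (pa (arch_nth beta 0))
            ((pb (arch_nth beta 0) * pd (arch_nth beta 0)) %/ pd (arch_nth beta (size beta).-1))%N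
            ((pa (arch_nth beta (size beta).-1) * pc (arch_nth beta (size beta).-1)) %/ pa (arch_nth beta 0))%N
            (pd (arch_nth beta (size beta).-1)).
Proof.
case: beta => [|p [|q s]] // [pos _] chain _.
have chs : chain_from p (q :: s) by exact: chain_from_arch.
have -> : arch_nth (p :: q :: s) (size (p :: q :: s)).-1 = last q s.
  by rewrite /arch_nth (nth_last default_pattern (p :: q :: s)).
rewrite /pstar_all; split; last exact: foldl_pstar.
move=> M [[|X Xs] [// [sz] [fXs ->]]].
apply: (@is_factor_chain_prod p (q :: s)) => //; first exact: (pos 0).
- exact: (fXs 0).
- by move=> l; exact: (fXs l.+1).
Qed.
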